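(* Fix $p\in[1,\infty)$. Let $M=(X,K,\phi)$ and $N=(Y,L,\psi)$ be objects of $\mathsf{SMT}$, and let $M\prod N=(X\times Y,\,K\times L,\,\phi\times\psi)$ be their product in $\mathsf{SMT}$. Then the metric realizations satisfy a homotopy equivalence $$|M|\times|N|\;\simeq\;|M\textstyle\prod N|,$$ where $|M|\times|N|$ carries the product (maximum) metric.
   Context: $\mathsf{SMT}$ is the category whose objects are triples $(X,K,\phi)$ with $X$ a metric space, $K$ an abstract simplicial complex (vertex set $K^0$, family of nonempty finite subsets containing all singletons and closed under nonempty subsets) and $\phi\colon X\to K^0$ a bijection, and whose morphisms $(X,K,\phi)\to(Y,L,\psi)$ are pairs $(f,g)$ with $f$ a 1-Lipschitz map, $g$ a simplicial map and $\psi\circ f=g|_{K^0}\circ\phi$. The product $X\times Y$ of metric spaces carries the metric $d((x,y),(x',y'))=\max\{d(x,x'),d(y,y')\}$. The product $K\times L$ of simplicial complexes has vertex set $K^0\times L^0$, and a finite nonempty subset of $K^0\times L^0$ is a simplex iff its projection to $K^0$ is a simplex of $K$ and its projection to $L^0$ is a simplex of $L$. Metric realization: for an object $(X,K,\phi)$, $|(X,K,\phi)|$ is the set of finitely supported probability measures $\mu=\sum_{i=1}^n\lambda_i\delta_{x_i}$ on $X$ (distinct $x_i$, $\lambda_i>0$, $\sum\lambda_i=1$, $\delta_x$ the Dirac mass at $x$) such that $\phi(\mathrm{supp}\,\mu)=\phi(\{x_1,\dots,x_n\})$ is a simplex of $K$, equipped with the $p$-Wasserstein metric $W_p(\mu,\nu)=\inf_{\pi}\left(\int_{X\times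 X}d(x,y)^p\,d\pi(x,y)\right)^{1/p}$, the infimum over probability measures $\pi$ on $X\times X$ with marginals $\mu$ and $\nu$. *)

From HB Require Import structures.
From mathcomp Require Import all_boot all_order all_algebra.
From mathcomp Require Import all_classical all_reals exp.
Set Implicit Arguments. Unset Strict Implicit. Unset Printing Implicit Defensive.
Import Order.TTheory GRing.Theory Num.Theory.
Local Open Scope classical_set_scope.
Local Open Scope ring_scope.

Section Defs.
Variable R : realType.

Definition is_metric (T : Type) (d : T -> T -> R) : Prop :=
  (forall x y, 0 <= d x y) /\ (forall x y, d x y = 0 <-> x = y) /\
  (forall x y, d x y = d y x) /\ (forall x y z, d x z <= d x y + d y z).

Definition is_simplicial_complex (V : Type) (simp : set (set V)) : Prop :=
  (forall s, simp s -> finite_set s /\ s !=set0) /\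
  (forall v, simp [set v]) /\
  (forall s t, simp s -> t `<=` s -> t !=set0 -> simp t).

Definition max_metric (X Y : Type) (dX : X -> X -> R) (dY : Y -> Y -> R)
  (a b : X * Y) : R := Num.max (dX a.1 b.1) (dY a.2 b.2).

Definition prod_complex (V W : Type) (sK : set (set V)) (sL : set (set W))
  : set (set (V * W)) :=
  fun s => [/\ finite_set s, s !=set0, sK (fst @` s) & sL (snd @` s)].

Definition prod_map (X Y V W : Type) (f : X -> V) (g : Y -> W) (z : X * Y)
  : V * W := (f z.1, g z.2).

Definition supp (T : Type) (mu : T -> R) : set T := [set x | mu x != 0].

Definition is_fsprob (T : choiceType) (mu : T -> R) : Prop :=
  [/\ forall x, 0 <= mu x, finite_set (supp mu) & \sum_(x \in supp mu) mu x = 1].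

Definition is_coupling (T : choiceType) (mu nu : T -> R) (pi : T * T -> R) : Prop :=
  [/\ forall z, 0 <= pi z, finite_set (supp pi),
      forall x, \sum_(y \in [set: T]) pi (x, y) = mu x &
      forall y, \sum_(x \in [set: T]) pi (x, y) = nu y].

Definition wasserstein (T : choiceType) (d : T -> T -> R) (p : R) (mu nu : T -> R) : R :=
  inf [set c | exists pi, is_coupling mu nu pi /\
        c = powR (\sum_(z \in [set: T * T]) pi z * powR (d z.1 z.2) p) p^-1].

Definition realization (X : choiceType) (V : Type) (simp : set (set V)) (phi : X -> V) :=
  {mu : X -> R | is_fsprob mu /\ simp (phi @` supp mu)}.

Definition realization_dist (X : choiceType) (V : Type) (simp : set (set V)) (phi : X -> V)
  (d : X -> X -> R) (p : R) (a b : realization simp phi) : R :=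
  wasserstein d p (proj1_sig a) (proj1_sig b).

Definition mcontinuous (A B : Type) (dA : A -> A -> R) (dB : B -> B -> R) (f : A -> B) :=
  forall a (e : R), 0 < e -> exists2 del : R, 0 < del &
    forall a', dA a a' < del -> dB (f a) (f a') < e.

(* homotopy between f and g : A -> B; H is continuous on A x [0,1]
   (product topology, equivalently the max metric) *)
Definition mhomotopic (A B : Type) (dA : A -> A -> R) (dB : B -> B -> R) (f g : A -> B) :=
  exists H : A -> R -> B,
    [/\ forall a t (e : R), 0 <= t <= 1 -> 0 < e -> exists2 del : R, 0 < del &
          forall a' t', 0 <= t' <= 1 -> dA a a' < del -> `|t - t'| < del ->
            dB (H a t) (H a' t') < e,
        forall a, H a 0 = f a &
        forall a, H a 1 = g a].

Definition mhomotopy_equivalent (A B : Type) (dA : A -> A -> R) (dB : B -> B -> R) :=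
  exists (f : A -> B) (g : B -> A),
    [/\ mcontinuous dA dB f, mcontinuous dB dA g,
        mhomotopic dA dA (g \o f) id & mhomotopic dB dB (f \o g) id].

End Defs.

Arguments realization_dist {R X V} simp phi d p a b.
Arguments realization {R X V} simp phi.

From HB Require Import structures.
From mathcomp Require Import all_boot all_order all_algebra.
From mathcomp Require Import all_classical all_reals exp.
From mathcomp Require Import ring lra.
Import Order.TTheory GRing.Theory Num.Theory.
Local Open Scope classical_set_scope.
Local Open Scope ring_scope.
Set Implicit Arguments. Unset Strict Implicit. Unset Printing Implicit Defensive.

(* The homotopy
   equivalence |M| x |N| ~ |M x N| is given by
     tensor_point    : (mu, nu) |-> mu (x) nu   (independent product),
     marginal_points : pi |-> (first marginal, second marginal).
   Taking marginals of a product gives back (mu, nu), and the straight line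
   t |-> (1 - t) decorrelate pi + t pi  joins the other composite to the identity,
   staying inside the box of the marginals of pi, hence inside |M x N|. *)

Section FinitelySupportedSums.
Variable R : realType.

(* f has finite support.  All masses and couplings below are finitely supported,
   so their sums over a whole type are genuine finite sums. *)
Definition fsupported (T : Type) (f : T -> R) : Prop := finite_set (supp f).

Lemma notin_supp (T : Type) (f : T -> R) x : ~ supp f x -> f x = 0.
Proof. by move=> h; apply/eqP/negPn/negP. Qed.

Lemma fsupported_sub (T : Type) (S : set T) (f : T -> R) :
  finite_set S -> supp f `<=` S -> fsupported f.
Proof. by move=> fS sub; exact: sub_finite_set sub fS. Qed.

Lemma fsupported_supp (T : Type) (f g : T -> R) :
  fsupported g -> (forall x, f x != 0 -> g x != 0) -> fsupported f.
Proof. by move=> fg fg_supp; apply: (fsupported_sub fg) => x /fg_supp. Qed.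

Lemma fsupportedD (T : Type) (f g : T -> R) :
  fsupported f -> fsupported g -> fsupported (fun x => f x + g x).
Proof.
move=> ff fg; have fU : finite_set (supp f `|` supp g) by rewrite finite_setU.
apply: (fsupported_sub fU) => x fgx; apply: contrapT => /not_orP[nf ng].
by move: fgx; rewrite /supp /= (notin_supp nf) (notin_supp ng) addr0 eqxx.
Qed.

Lemma fsupportedM (T : Type) (f g : T -> R) : fsupported f -> fsupported (fun x => f x * g x).
Proof. by move=> ff; apply: (fsupported_supp ff) => x; apply: contra_neq => ->; rewrite mul0r. Qed.

Lemma fsupportedZ (T : Type) (a : R) (f : T -> R) : fsupported f -> fsupported (fun x => a * f x).
Proof. by move=> ff; apply: (fsupported_supp ff) => x; apply: contra_neq => ->; rewrite mulr0. Qed.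

Lemma fsupported_row (A B : Type) (g : A * B -> R) x :
  fsupported g -> fsupported (fun b => g (x, b)).
Proof. by move=> fg; apply: (fsupported_sub (finite_image snd fg)) => b gxb; exists (x, b). Qed.

Lemma fsupported_column (A B : Type) (g : A * B -> R) y :
  fsupported g -> fsupported (fun a => g (a, y)).
Proof. by move=> fg; apply: (fsupported_sub (finite_image fst fg)) => a gay; exists (a, y). Qed.

Lemma fsumT_widen (T : choiceType) (A : set T) (f : T -> R) :
  (forall x, ~ A x -> f x = 0) ->
  \sum_(x \in [set: T]) f x = \sum_(x \in A) f x.
Proof. by move=> h; symmetry; apply: fsbig_widen => // x [_ /h]. Qed.

Lemma fsumT_neq0 (T : choiceType) (f : T -> R) :
  \sum_(x \in [set: T]) f x != 0 -> exists a, f a != 0.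
Proof.
move=> sum_neq0; apply: contrapT => f0; move/eqP: sum_neq0; apply; apply: fsbig1 => a _.
by apply/eqP/negPn/negP => fa; apply: f0; exists a.
Qed.

Lemma fsumTD (T : choiceType) (f g : T -> R) : fsupported f -> fsupported g ->
  \sum_(x \in [set: T]) (f x + g x) =
  \sum_(x \in [set: T]) f x + \sum_(x \in [set: T]) g x.
Proof.
move=> ff fg; set S := supp f `|` supp g.
have fS : finite_set S by rewrite finite_setU.
have off : forall x, ~ S x -> f x = 0 /\ g x = 0.
  by move=> x /not_orP[nf ng]; split; apply: notin_supp.
rewrite !(fsumT_widen (A := S)) ?fsbig_split //.
- by move=> x /off[].
- by move=> x /off[].
- by move=> x /off[-> ->]; rewrite addr0.
Qed.

Lemma fsumT_le (T : choiceType) (f g : T -> R) : fsupported f -> fsupported g ->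
  (forall x, f x <= g x) ->
  \sum_(x \in [set: T]) f x <= \sum_(x \in [set: T]) g x.
Proof.
move=> ff fg fg_le; set S := supp f `|` supp g.
have fS : finite_set S by rewrite finite_setU.
rewrite !(fsumT_widen (A := S)); last 2 first.
- by move=> x /not_orP[_]; apply: notin_supp.
- by move=> x /not_orP[+ _]; apply: notin_supp.
by rewrite !fsbig_finite //; apply: ler_sum => x _.
Qed.

Lemma fsumT_delta (T : choiceType) (f : T -> R) (y : T) :
  \sum_(x \in [set: T]) f x * (x == y)%:R = f y.
Proof.
rewrite (fsumT_widen (A := [set y])) ?fsbig_set1 ?eqxx ?mulr1 // => x /eqP /negPf.
by move=> ->; rewrite mulr0.
Qed.

Lemma fsumT_gt0 (T : choiceType) (f : T -> R) a : fsupported f ->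
  (forall x, 0 <= f x) -> 0 < f a -> 0 < \sum_(x \in [set: T]) f x.
Proof.
move=> ff f0 fa; rewrite (fsumT_widen (A := supp f)); last exact: notin_supp.
rewrite (fsbigD1 a) //=; last by rewrite /supp /= gt_eqF.
by apply: ltr_wpDr => //; apply: fsumr_ge0.
Qed.

Lemma fsumT_box (A B : choiceType) (F : A -> B -> R) (SA : set A) (SB : set B) :
  (forall a b, F a b != 0 -> SA a /\ SB b) ->
  \sum_(a \in [set: A]) \sum_(b \in [set: B]) F a b =
  \sum_(a \in SA) \sum_(b \in SB) F a b.
Proof.
move=> box; rewrite (fsumT_widen (A := SA)) => [|a nSA]; last first.
  by apply: fsbig1 => b _; apply/eqP/negPn/negP => /box[].
apply: eq_fsbigr => a _; apply: fsumT_widen => b nSB.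
by apply/eqP/negPn/negP => /box[].
Qed.

Lemma fsumT_pair (A B : choiceType) (F : A * B -> R) : fsupported F ->
  \sum_(z \in [set: A * B]) F z =
  \sum_(a \in [set: A]) \sum_(b \in [set: B]) F (a, b).
Proof.
move=> fF; set SA := fst @` supp F; set SB := snd @` supp F.
have box : forall a b, F (a, b) != 0 -> SA a /\ SB b.
  by move=> a b h; split; exists (a, b).
rewrite (fsumT_box box) pair_fsbig; try exact: finite_image.
rewrite (fsumT_widen (A := SA `*` SB)); first by apply: eq_fsbigr => -[].
by move=> [a b] nbox; apply/eqP/negPn/negP => /box; exact: nbox.
Qed.

Lemma fsumT_exchange (A B : choiceType) (F : A -> B -> R) :
  fsupported (fun z : A * B => F z.1 z.2) ->
  \sum_(a \in [set: A]) \sum_(b \in [set: B]) F a b =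
  \sum_(b \in [set: B]) \sum_(a \in [set: A]) F a b.
Proof.
move=> fF; set S := supp (fun z : A * B => F z.1 z.2).
have box : forall a b, F a b != 0 -> (fst @` S) a /\ (snd @` S) b.
  by move=> a b h; split; exists (a, b).
rewrite (fsumT_box box) exchange_fsbig; try exact: finite_image.
by rewrite (@fsumT_box _ _ (fun b a => F a b) (snd @` S) (fst @` S)) // => b a /box[].
Qed.

End FinitelySupportedSums.

Section Pushforward.
Variable R : realType.

Definition pushforward (A B : choiceType) (h : A -> B) (F : A -> R) (b : B) : R :=
  \sum_(a \in [set: A]) F a * (h a == b)%:R.

Lemma supp_pushforward (A B : choiceType) (h : A -> B) (F : A -> R) :
  supp (pushforward h F) `<=` h @` supp F.
Proof.
move=> b /fsumT_neq0[a]; have [<- hF|] := eqVneq (h a) b; last by rewrite mulr0 eqxx.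
by exists a => //; rewrite /supp /= -(mulr1 (F a)).
Qed.

Lemma pushforward_fsupported (A B : choiceType) (h : A -> B) (F : A -> R) :
  fsupported F -> fsupported (pushforward h F).
Proof.
by move=> fF; apply: (fsupported_sub (finite_image h fF)); exact: supp_pushforward.
Qed.

Lemma pushforward_ge0 (A B : choiceType) (h : A -> B) (F : A -> R) :
  (forall a, 0 <= F a) -> forall b, 0 <= pushforward h F b.
Proof. by move=> F0 b; apply: fsumr_ge0 => a _; rewrite mulr_ge0 ?ler0n. Qed.

Lemma pushforward_gt0 (A B : choiceType) (h : A -> B) (F : A -> R) a :
  fsupported F -> (forall x, 0 <= F x) -> F a != 0 -> 0 < pushforward h F (h a).
Proof.
move=> fF F0 Fa; apply: (@fsumT_gt0 _ _ _ a).
- by apply: (fsupported_supp fF) => x; apply: contra_neq => ->; rewrite mul0r.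
- by move=> x; rewrite mulr_ge0 ?ler0n.
- by rewrite eqxx mulr1 lt_neqAle eq_sym Fa F0.
Qed.

Lemma eq_pushforward (A B : choiceType) (h h' : A -> B) (F F' : A -> R) :
  h =1 h' -> F =1 F' -> pushforward h F =1 pushforward h' F'.
Proof. by move=> eh eF b; apply: eq_fsbigr => a _; rewrite eh eF. Qed.

Lemma pushforward_sumE (A B : choiceType) (h : A -> B) (F : A -> R) (G : B -> R) :
  fsupported F ->
  \sum_(b \in [set: B]) pushforward h F b * G b = \sum_(a \in [set: A]) F a * G (h a).
Proof.
move=> fF.
transitivity (\sum_(b \in [set: B]) \sum_(a \in [set: A]) F a * (h a == b)%:R * G b).
  by apply: eq_fsbigr => b _; rewrite /pushforward mulr_fsuml.
rewrite fsumT_exchange; last first.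
  apply: (fsupported_sub (finite_image (fun a => (h a, a)) fF)) => -[b a].
  rewrite /supp /=; have [<- Fa|] := eqVneq (h a) b; last by rewrite mulr0 mul0r eqxx.
  by exists a => //; apply: contra_neq Fa => ->; rewrite !mul0r.
apply: eq_fsbigr => a _; rewrite -[RHS](fsumT_delta (fun b => F a * G b)).
by apply: eq_fsbigr => b _; rewrite (eq_sym b); ring.
Qed.

Lemma pushforward_comp (A B C : choiceType) (h : A -> B) (g : B -> C) (F : A -> R) :
  fsupported F -> pushforward g (pushforward h F) =1 pushforward (g \o h) F.
Proof. by move=> fF c; rewrite /pushforward [LHS]pushforward_sumE. Qed.

Lemma fsumT_row (A B : choiceType) (pi : A * B -> R) : fsupported pi ->
  forall x, \sum_(y \in [set: B]) pi (x, y) = pushforward fst pi x.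
Proof.
move=> fpi x; rewrite /pushforward fsumT_pair; last first.
  by apply: (fsupported_supp fpi) => z; apply: contra_neq => ->; rewrite mul0r.
rewrite -[LHS](fsumT_delta (fun a => \sum_(b \in [set: B]) pi (a, b))).
by apply: eq_fsbigr => a _; rewrite mulr_fsuml.
Qed.

Lemma fsumT_column (A B : choiceType) (pi : A * B -> R) : fsupported pi ->
  forall y, \sum_(x \in [set: A]) pi (x, y) = pushforward snd pi y.
Proof.
move=> fpi y; rewrite /pushforward fsumT_pair; last first.
  by apply: (fsupported_supp fpi) => z; apply: contra_neq => ->; rewrite mul0r.
rewrite fsumT_exchange; last first.
  by apply: (fsupported_supp fpi) => -[a b]; apply: contra_neq => /= ->; rewrite mul0r.
rewrite -[LHS](fsumT_delta (fun b => \sum_(a \in [set: A]) pi (a, b))).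
by apply: eq_fsbigr => b _; rewrite mulr_fsuml.
Qed.

Lemma couplingP (T : choiceType) (mu nu : T -> R) (pi : T * T -> R) :
  is_coupling mu nu pi <->
  [/\ (forall z, 0 <= pi z), fsupported pi,
      pushforward fst pi =1 mu & pushforward snd pi =1 nu].
Proof.
split=> -[pi0 fpi m1 m2]; split => // x.
- by rewrite -fsumT_row.
- by rewrite -fsumT_column.
- by rewrite fsumT_row.
- by rewrite fsumT_column.
Qed.

Lemma fsprobP (T : choiceType) (mu : T -> R) :
  is_fsprob mu <->
  [/\ (forall x, 0 <= mu x), fsupported mu & \sum_(x \in [set: T]) mu x = 1].
Proof.
rewrite (fsumT_widen (A := supp mu)); last exact: notin_supp.
by split => -[].
Qed.

Lemma fsprob_pushforward (A B : choiceType) (h : A -> B) (mu : A -> R) :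
  is_fsprob mu -> is_fsprob (pushforward h mu).
Proof.
move=> /fsprobP[mu0 fmu mu1]; apply/fsprobP; split.
- exact: pushforward_ge0.
- exact: pushforward_fsupported.
- rewrite -[RHS]mu1; transitivity (\sum_(b \in [set: B]) pushforward h mu b * 1).
    by apply: eq_fsbigr => b _; rewrite mulr1.
  by rewrite pushforward_sumE //; apply: eq_fsbigr => a _; rewrite mulr1.
Qed.

End Pushforward.

Section ProductsMixturesCosts.
Variable R : realType.

Definition prod_mass (A B : Type) (mu : A -> R) (nu : B -> R) (z : A * B) : R :=
  mu z.1 * nu z.2.

Lemma prod_mass_fsupported (A B : Type) (mu : A -> R) (nu : B -> R) :
  fsupported mu -> fsupported nu -> fsupported (prod_mass mu nu).
Proof.
move=> fmu fnu; apply: (fsupported_sub (finite_setX fmu fnu)) => z.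
by rewrite /supp /prod_mass /= mulf_eq0 negb_or => /andP[].
Qed.

Lemma prod_mass_ge0 (A B : Type) (mu : A -> R) (nu : B -> R) :
  (forall x, 0 <= mu x) -> (forall y, 0 <= nu y) -> forall z, 0 <= prod_mass mu nu z.
Proof. by move=> mu0 nu0 z; rewrite mulr_ge0. Qed.

Lemma fsumT_prod_mass (A B : choiceType) (mu : A -> R) (nu : B -> R) :
  fsupported mu -> fsupported nu ->
  \sum_(z \in [set: A * B]) prod_mass mu nu z =
  (\sum_(x \in [set: A]) mu x) * \sum_(y \in [set: B]) nu y.
Proof.
move=> fmu fnu; rewrite fsumT_pair; last exact: prod_mass_fsupported.
by rewrite mulr_fsuml; apply: eq_fsbigr => a _; rewrite mulr_fsumr.
Qed.

Lemma fsprob_prod_mass (A B : choiceType) (mu : A -> R) (nu : B -> R) :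
  is_fsprob mu -> is_fsprob nu -> is_fsprob (prod_mass mu nu).
Proof.
move=> /fsprobP[mu0 fmu mu1] /fsprobP[nu0 fnu nu1]; apply/fsprobP; split.
- exact: prod_mass_ge0.
- exact: prod_mass_fsupported.
- by rewrite fsumT_prod_mass // mu1 nu1 mulr1.
Qed.

Lemma pushforward_fst_prod_mass (A B : choiceType) (mu : A -> R) (nu : B -> R) :
  fsupported mu -> fsupported nu -> \sum_(y \in [set: B]) nu y = 1 ->
  pushforward fst (prod_mass mu nu) =1 mu.
Proof.
move=> fmu fnu nu1 x; rewrite -fsumT_row; last exact: prod_mass_fsupported.
by rewrite /prod_mass /= -mulr_fsumr nu1 mulr1.
Qed.

Lemma pushforward_snd_prod_mass (A B : choiceType) (mu : A -> R) (nu : B -> R) :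
  fsupported mu -> fsupported nu -> \sum_(x \in [set: A]) mu x = 1 ->
  pushforward snd (prod_mass mu nu) =1 nu.
Proof.
move=> fmu fnu mu1 y; rewrite -fsumT_column; last exact: prod_mass_fsupported.
by rewrite /prod_mass /= -mulr_fsuml mu1 mul1r.
Qed.

Definition decorrelate (A B : choiceType) (pi : A * B -> R) : A * B -> R :=
  prod_mass (pushforward fst pi) (pushforward snd pi).

Lemma coupling_prod_mass (T : choiceType) (mu nu : T -> R) :
  is_fsprob mu -> is_fsprob nu -> is_coupling mu nu (prod_mass mu nu).
Proof.
move=> /fsprobP[mu0 fmu mu1] /fsprobP[nu0 fnu nu1]; apply/couplingP; split.
- exact: prod_mass_ge0.
- exact: prod_mass_fsupported.
- exact: pushforward_fst_prod_mass.
- exact: pushforward_snd_prod_mass.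
Qed.

Definition mix3 (A : Type) (a b c : R) (f g h : A -> R) (x : A) : R :=
  a * f x + b * g x + c * h x.

Lemma mix3_fsupported (A : Type) a b c (f g h : A -> R) :
  fsupported f -> fsupported g -> fsupported h -> fsupported (mix3 a b c f g h).
Proof. by move=> ff fg fh; do 2?apply: fsupportedD; exact: fsupportedZ. Qed.

Lemma mix3_ge0 (A : Type) a b c (f g h : A -> R) : 0 <= a -> 0 <= b -> 0 <= c ->
  (forall x, 0 <= f x) -> (forall x, 0 <= g x) -> (forall x, 0 <= h x) ->
  forall x, 0 <= mix3 a b c f g h x.
Proof. by move=> *; rewrite /mix3 !addr_ge0 ?mulr_ge0. Qed.

Lemma fsumT_mix3 (A : choiceType) a b c (f g h : A -> R) :
  fsupported f -> fsupported g -> fsupported h ->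
  \sum_(x \in [set: A]) mix3 a b c f g h x =
  a * \sum_(x \in [set: A]) f x + b * \sum_(x \in [set: A]) g x +
  c * \sum_(x \in [set: A]) h x.
Proof.
move=> ff fg fh; rewrite /mix3 fsumTD; last 2 first.
- by apply: fsupportedD; exact: fsupportedZ.
- exact: fsupportedZ.
by rewrite fsumTD ?mulr_fsumr //; exact: fsupportedZ.
Qed.

Lemma pushforward_mix3 (A B : choiceType) (k : A -> B) a b c (f g h : A -> R) :
  fsupported f -> fsupported g -> fsupported h ->
  pushforward k (mix3 a b c f g h) =1
  mix3 a b c (pushforward k f) (pushforward k g) (pushforward k h).
Proof.
move=> ff fg fh y; rewrite [RHS]/mix3 /pushforward -fsumT_mix3; try exact: fsupportedM.
by apply: eq_fsbigr => x _; rewrite /mix3; ring.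
Qed.

Lemma coupling_mix3 (T : choiceType) a b c (m1 m2 m3 n1 n2 n3 : T -> R)
  (g1 g2 g3 : T * T -> R) : 0 <= a -> 0 <= b -> 0 <= c ->
  is_coupling m1 n1 g1 -> is_coupling m2 n2 g2 -> is_coupling m3 n3 g3 ->
  is_coupling (mix3 a b c m1 m2 m3) (mix3 a b c n1 n2 n3) (mix3 a b c g1 g2 g3).
Proof.
move=> a0 b0 c0 /couplingP[g10 fg1 l1 r1] /couplingP[g20 fg2 l2 r2]
  /couplingP[g30 fg3 l3 r3]; apply/couplingP; split.
- exact: mix3_ge0.
- exact: mix3_fsupported.
- by move=> x; rewrite pushforward_mix3 // /mix3 l1 l2 l3.
- by move=> y; rewrite pushforward_mix3 // /mix3 r1 r2 r3.
Qed.

Definition cost (T : choiceType) (d : T -> T -> R) (p : R) (pi : T * T -> R) : R :=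
  \sum_(z \in [set: T * T]) pi z * powR (d z.1 z.2) p.

Lemma cost_ge0 (T : choiceType) (d : T -> T -> R) p (pi : T * T -> R) :
  (forall z, 0 <= pi z) -> 0 <= cost d p pi.
Proof. by move=> pi0; apply: fsumr_ge0 => z _; rewrite mulr_ge0 ?powR_ge0. Qed.

Lemma coupling_cost_ge0 (T : choiceType) (d : T -> T -> R) p (mu nu : T -> R)
  (pi : T * T -> R) : is_coupling mu nu pi -> 0 <= cost d p pi.
Proof. by case=> pi0 *; exact: cost_ge0. Qed.

Lemma cost_mix3 (T : choiceType) (d : T -> T -> R) p a b c (g1 g2 g3 : T * T -> R) :
  fsupported g1 -> fsupported g2 -> fsupported g3 ->
  cost d p (mix3 a b c g1 g2 g3) = a * cost d p g1 + b * cost d p g2 + c * cost d p g3.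
Proof.
move=> fg1 fg2 fg3; rewrite /cost -fsumT_mix3; try exact: fsupportedM.
by apply: eq_fsbigr => z _; rewrite /mix3; ring.
Qed.

Section Wasserstein.
Variables (T : choiceType) (d : T -> T -> R) (p : R).
Hypothesis p_gt0 : 0 < p.

Lemma wasserstein_lt (mu nu : T -> R) (pi : T * T -> R) e :
  0 < e -> is_coupling mu nu pi -> cost d p pi < powR e p ->
  wasserstein d p mu nu < e.
Proof.
move=> e0 cpl cost_lt; rewrite /wasserstein; set S := [set c | _].
have inS : S (powR (cost d p pi) p^-1) by exists pi.
have lbS : has_lbound S by exists 0 => _ [pi' [_ ->]]; exact: powR_ge0.
apply: le_lt_trans (ge_inf lbS inS) _.
have -> : e = powR (powR e p) p^-1.
  by rewrite -powRrM mulfV ?gt_eqF // powRr1 // ltW.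
have c0 := coupling_cost_ge0 d p cpl.
by apply: gt0_ltr_powR; rewrite ?nnegrE ?invr_gt0 ?powR_ge0.
Qed.

Lemma wasserstein_lt_coupling (mu nu : T -> R) e :
  is_fsprob mu -> is_fsprob nu -> wasserstein d p mu nu < e ->
  exists2 pi, is_coupling mu nu pi & cost d p pi < powR e p.
Proof.
move=> pmu pnu; rewrite /wasserstein; set S := [set c | _] => W_lt.
have neS : S !=set0.
  by exists (powR (cost d p (prod_mass mu nu)) p^-1); exists (prod_mass mu nu);
    split => //; exact: coupling_prod_mass.
have [_ [pi [cpl ->]] lt_e] := inf_lt neS W_lt.
exists pi => //; have c0 := coupling_cost_ge0 d p cpl.
have -> : cost d p pi = powR (powR (cost d p pi) p^-1) p.
  by rewrite -powRrM mulVf ?gt_eqF // powRr1.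
apply: gt0_ltr_powR; rewrite ?nnegrE ?powR_ge0 //.
exact: le_trans (powR_ge0 _ _) (ltW lt_e).
Qed.

Lemma mix3_wasserstein_lt a b c (m1 m2 m3 n1 n2 n3 : T -> R) (g1 g2 g3 : T * T -> R) e :
  0 < e -> 0 <= a <= 1 -> 0 <= b <= 1 -> 0 <= c ->
  is_coupling m1 n1 g1 -> is_coupling m2 n2 g2 -> is_coupling m3 n3 g3 ->
  cost d p g1 + cost d p g2 + c * cost d p g3 < powR e p ->
  wasserstein d p (mix3 a b c m1 m2 m3) (mix3 a b c n1 n2 n3) < e.
Proof.
move=> e0 /andP[a0 a1] /andP[b0 b1] c0 cpl1 cpl2 cpl3 cost_lt.
apply: (wasserstein_lt e0 (coupling_mix3 a0 b0 c0 cpl1 cpl2 cpl3)).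
have k1 := coupling_cost_ge0 d p cpl1; have k2 := coupling_cost_ge0 d p cpl2.
rewrite cost_mix3; try by [case: cpl1 | case: cpl2 | case: cpl3].
have : a * cost d p g1 <= cost d p g1 by rewrite ler_piMl.
have : b * cost d p g2 <= cost d p g2 by rewrite ler_piMl.
lra.
Qed.

End Wasserstein.

End ProductsMixturesCosts.

Section MaxMetric.
Variable R : realType.
Variables (X Y : Type) (dX : X -> X -> R) (dY : Y -> Y -> R).

Lemma max_metric_ge_l (z z' : X * Y) : dX z.1 z'.1 <= max_metric dX dY z z'.
Proof. by rewrite /max_metric le_max lexx. Qed.

Lemma max_metric_ge_r (z z' : X * Y) : dY z.2 z'.2 <= max_metric dX dY z z'.
Proof. by rewrite /max_metric le_max lexx orbT. Qed.

Lemma max_metric_ge0 : (forall x x', 0 <= dX x x') ->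
  forall z z' : X * Y, 0 <= max_metric dX dY z z'.
Proof. by move=> dX0 z z'; exact: le_trans (dX0 _ _) (max_metric_ge_l z z'). Qed.

Lemma max_metric_triangle :
  (forall x y z, dX x z <= dX x y + dX y z) -> (forall x y z, dY x z <= dY x y + dY y z) ->
  forall u v w : X * Y, max_metric dX dY u w <= max_metric dX dY u v + max_metric dX dY v w.
Proof.
move=> triX triY u v w; rewrite {1}/max_metric ge_max.
have := max_metric_ge_l u v; have := max_metric_ge_r u v.
have := max_metric_ge_l v w; have := max_metric_ge_r v w.
have := triX u.1 v.1 w.1; have := triY u.2 v.2 w.2.
by move=> *; apply/andP; split; lra.
Qed.

End MaxMetric.

Section PowerInequalities.
Variable R : realType.
Variable p : R.
Hypothesis p_ge0 : 0 <= p.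

Lemma powR_le (a b : R) : 0 <= a -> a <= b -> powR a p <= powR b p.
Proof.
by move=> a0 ab; apply: ge0_ler_powR; rewrite ?nnegrE //; exact: le_trans a0 ab.
Qed.

Lemma powR_max_le (a b : R) : 0 <= a -> 0 <= b ->
  powR (Num.max a b) p <= powR a p + powR b p.
Proof.
move=> a0 b0; have := powR_ge0 a p; have := powR_ge0 b p.
by have [|] := leP a b; lra.
Qed.

Lemma powR_quasi_triangle (T : Type) (d : T -> T -> R) :
  (forall x y, 0 <= d x y) -> (forall x y z, d x z <= d x y + d y z) ->
  forall x y z, powR (d x z) p <= powR 2 p * (powR (d x y) p + powR (d y z) p).
Proof.
move=> d0 tri x y z.
have dxz : d x z <= 2 * Num.max (d x y) (d y z).
  by have := tri x y z; have [|] := leP (d x y) (d y z); lra.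
apply: le_trans (powR_le (d0 _ _) dxz) _.
rewrite powRM //; last by rewrite le_max d0.
by rewrite ler_wpM2l ?powR_ge0 // powR_max_le.
Qed.

End PowerInequalities.

Section Couplings.
Variable R : realType.

Lemma coupling_mass1 (T : choiceType) (mu nu : T -> R) (pi : T * T -> R) :
  is_coupling mu nu pi -> \sum_(x \in [set: T]) mu x = 1 ->
  \sum_(z \in [set: T * T]) pi z = 1.
Proof.
move=> /couplingP[_ fpi l _] <-.
transitivity (\sum_(x \in [set: T]) pushforward fst pi x * 1).
  by rewrite pushforward_sumE //; apply: eq_fsbigr => z _; rewrite mulr1.
by apply: eq_fsbigr => x _; rewrite l mulr1.
Qed.

Lemma coupling_fsupported_r (T : choiceType) (mu nu : T -> R) (pi : T * T -> R) :
  is_coupling mu nu pi -> fsupported nu.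
Proof.
move=> /couplingP[_ fpi _ r].
by apply: (fsupported_supp (pushforward_fsupported snd fpi)) => y; rewrite r.
Qed.

Lemma coupling_pushforward (Z U : choiceType) (q : Z -> U) (al be : Z -> R)
  (ga : Z * Z -> R) : is_coupling al be ga ->
  is_coupling (pushforward q al) (pushforward q be)
              (pushforward (fun w => (q w.1, q w.2)) ga).
Proof.
move=> /couplingP[ga0 fga l r]; apply/couplingP; split.
- exact: pushforward_ge0.
- exact: pushforward_fsupported.
- move=> u; rewrite pushforward_comp // (@eq_pushforward _ _ _ _ (q \o fst) _ ga) //.
  by rewrite -pushforward_comp //; exact: eq_pushforward.
- move=> u; rewrite pushforward_comp // (@eq_pushforward _ _ _ _ (q \o snd) _ ga) //.
  by rewrite -pushforward_comp //; exact: eq_pushforward.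
Qed.

Lemma cost_pushforward_le (Z U : choiceType) (dZ : Z -> Z -> R) (dU : U -> U -> R)
  (p : R) (q : Z -> U) (ga : Z * Z -> R) : 0 <= p ->
  (forall u u', 0 <= dU u u') -> (forall z z', dU (q z) (q z') <= dZ z z') ->
  (forall w, 0 <= ga w) -> fsupported ga ->
  cost dU p (pushforward (fun w => (q w.1, q w.2)) ga) <= cost dZ p ga.
Proof.
move=> p0 dU0 lip ga0 fga; rewrite /cost pushforward_sumE //.
apply: fsumT_le; try exact: fsupportedM.
by move=> w /=; rewrite ler_wpM2l // (powR_le p0 (dU0 _ _) (lip _ _)).
Qed.

End Couplings.

Section TensorCoupling.
Variable R : realType.
Variables (X Y : choiceType).

Definition regroup (w : (X * Y) * (X * Y)) : (X * X) * (Y * Y) :=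
  ((w.1.1, w.2.1), (w.1.2, w.2.2)).

Definition ungroup (i : (X * X) * (Y * Y)) : (X * Y) * (X * Y) :=
  ((i.1.1, i.2.1), (i.1.2, i.2.2)).

Definition tensor_coupling (g1 : X * X -> R) (g2 : Y * Y -> R) w : R :=
  prod_mass g1 g2 (regroup w).

Lemma fsumT_regroup (F : (X * Y) * (X * Y) -> R) :
  \sum_(w \in [set: (X * Y) * (X * Y)]) F w =
  \sum_(i \in [set: (X * X) * (Y * Y)]) F (ungroup i).
Proof. by apply: reindex_fsbigT; exists regroup => [[[? ?] [? ?]]|[[? ?] [? ?]]]. Qed.

Lemma tensor_fsupported (g1 : X * X -> R) (g2 : Y * Y -> R) :
  fsupported g1 -> fsupported g2 -> fsupported (tensor_coupling g1 g2).
Proof.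
move=> fg1 fg2; apply: (fsupported_sub (finite_image ungroup (prod_mass_fsupported fg1 fg2))).
by move=> [[a b] [a' b']] w_supp; exists ((a, a'), (b, b')).
Qed.

Lemma coupling_tensor (mu mu' : X -> R) (nu nu' : Y -> R) (g1 : X * X -> R)
  (g2 : Y * Y -> R) : is_coupling mu mu' g1 -> is_coupling nu nu' g2 ->
  is_coupling (prod_mass mu nu) (prod_mass mu' nu') (tensor_coupling g1 g2).
Proof.
move=> cpl1 cpl2; have [g10 fg1 l1 r1] := cpl1; have [g20 fg2 l2 r2] := cpl2.
split => [w|||].
- by rewrite /tensor_coupling prod_mass_ge0.
- exact: tensor_fsupported.
- move=> z; transitivity (\sum_(w \in [set: X * Y])
    prod_mass (fun a => g1 (z.1, a)) (fun b => g2 (z.2, b)) w) => //.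
  by rewrite fsumT_prod_mass ?l1 ?l2 //; [exact: fsupported_row | exact: fsupported_row].
- move=> z; transitivity (\sum_(w \in [set: X * Y])
    prod_mass (fun a => g1 (a, z.1)) (fun b => g2 (b, z.2)) w) => //.
  by rewrite fsumT_prod_mass ?r1 ?r2 //; [exact: fsupported_column | exact: fsupported_column].
Qed.

Lemma cost_tensor_le (dX : X -> X -> R) (dY : Y -> Y -> R) (p : R)
  (g1 : X * X -> R) (g2 : Y * Y -> R) :
  (forall x x', 0 <= dX x x') -> (forall y y', 0 <= dY y y') ->
  (forall w, 0 <= g1 w) -> (forall w, 0 <= g2 w) -> fsupported g1 -> fsupported g2 ->
  \sum_(w \in [set: X * X]) g1 w = 1 -> \sum_(w \in [set: Y * Y]) g2 w = 1 ->
  cost (max_metric dX dY) p (tensor_coupling g1 g2) <= cost dX p g1 + cost dY p g2.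
Proof.
move=> dX0 dY0 g10 g20 fg1 fg2 g1_1 g2_1; have ft := tensor_fsupported fg1 fg2.
pose cX w := tensor_coupling g1 g2 w * powR (dX w.1.1 w.2.1) p.
pose cY w := tensor_coupling g1 g2 w * powR (dY w.1.2 w.2.2) p.
have costX : \sum_(w \in [set: (X * Y) * (X * Y)]) cX w = cost dX p g1.
  rewrite fsumT_regroup /cost -[RHS]mulr1 -g2_1 -fsumT_prod_mass //; last exact: fsupportedM.
  by apply: eq_fsbigr => -[[a a'] [b b']] _; rewrite /cX /tensor_coupling /prod_mass /=; ring.
have costY : \sum_(w \in [set: (X * Y) * (X * Y)]) cY w = cost dY p g2.
  rewrite fsumT_regroup /cost -[RHS]mul1r -g1_1 -fsumT_prod_mass //; last exact: fsupportedM.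
  by apply: eq_fsbigr => -[[a a'] [b b']] _; rewrite /cY /tensor_coupling /prod_mass /=; ring.
rewrite -costX -costY -fsumTD; try exact: fsupportedM.
apply: fsumT_le => [||w]; first exact: fsupportedM.
  by apply: fsupportedD; exact: fsupportedM.
rewrite /cX /cY -mulrDr ler_wpM2l ?prod_mass_ge0 //.
by apply: powR_max_le; [exact: dX0 | exact: dY0].
Qed.

End TensorCoupling.

Section CrossCost.
Variable R : realType.
Variables (T : choiceType) (d : T -> T -> R) (p : R).
Hypotheses (p_ge0 : 0 <= p) (d_ge0 : forall x y, 0 <= d x y)
  (d_triangle : forall x y z, d x z <= d x y + d y z).

Lemma cost_prod_mass (al g : T -> R) : fsupported al -> fsupported g ->
  cost d p (prod_mass al g) =
  \sum_(a \in [set: T]) al a * \sum_(b \in [set: T]) g b * powR (d a b) p.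
Proof.
move=> fal fg; rewrite /cost fsumT_pair; last exact/fsupportedM/prod_mass_fsupported.
by apply: eq_fsbigr => a _; rewrite mulr_fsumr; apply: eq_fsbigr => b _; rewrite /prod_mass /=; ring.
Qed.

Lemma moment_coupling_le (be be' : T -> R) (eta : T * T -> R) a :
  is_coupling be be' eta ->
  \sum_(b \in [set: T]) be' b * powR (d a b) p <=
  powR 2 p * (\sum_(b \in [set: T]) be b * powR (d a b) p + cost d p eta).
Proof.
move=> /couplingP[eta0 feta l r].
have -> : \sum_(b \in [set: T]) be' b * powR (d a b) p =
          \sum_(w \in [set: T * T]) eta w * powR (d a w.2) p.
  rewrite -(pushforward_sumE snd (fun b => powR (d a b) p) feta).
  by apply: eq_fsbigr => b _; rewrite r.
have -> : \sum_(b \in [set: T]) be b * powR (d a b) p =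
          \sum_(w \in [set: T * T]) eta w * powR (d a w.1) p.
  rewrite -(pushforward_sumE fst (fun b => powR (d a b) p) feta).
  by apply: eq_fsbigr => b _; rewrite l.
rewrite /cost mulrDr !mulr_fsumr -fsumTD; try by apply: fsupportedZ; exact: fsupportedM.
apply: fsumT_le => [||w]; first exact: fsupportedM.
  by apply: fsupportedD; apply: fsupportedZ; exact: fsupportedM.
apply: le_trans (ler_wpM2l (eta0 w) (powR_quasi_triangle p_ge0 d_ge0 d_triangle a w.1 w.2)) _.
by rewrite le_eqVlt; apply/orP; left; apply/eqP; ring.
Qed.

Lemma cost_prod_mass_le (al be be' : T -> R) (eta : T * T -> R) :
  is_fsprob al -> is_fsprob be -> is_coupling be be' eta ->
  cost d p (prod_mass al be') <= powR 2 p * (cost d p (prod_mass al be) + cost d p eta).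
Proof.
move=> /fsprobP[al0 fal al1] /fsprobP[_ fbe _] cpl.
rewrite !cost_prod_mass //; last exact: coupling_fsupported_r cpl.
have -> : cost d p eta = (\sum_(a \in [set: T]) al a) * cost d p eta.
  by rewrite al1 mul1r.
rewrite mulr_fsuml -fsumTD; last 2 first.
- by apply: fsupportedM.
- by apply: fsupportedM.
rewrite [X in _ <= X]mulr_fsumr; apply: fsumT_le => [||a].
- by apply: fsupportedM.
- by apply: fsupportedZ; apply: fsupportedD; apply: fsupportedM.
apply: le_trans (ler_wpM2l (al0 a) (moment_coupling_le a cpl)) _.
by rewrite le_eqVlt; apply/orP; left; apply/eqP; ring.
Qed.

End CrossCost.

Section Supports.
Variable R : realType.

Lemma supp_fsprob_neq0 (T : choiceType) (mu : T -> R) : is_fsprob mu -> supp mu !=set0.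
Proof.
move=> /fsprobP[_ _ mu1].
have /fsumT_neq0[a mua] : \sum_(x \in [set: T]) mu x != 0 by rewrite mu1 oner_eq0.
by exists a.
Qed.

Lemma supp_sub_marginals (A B : choiceType) (pi : A * B -> R) :
  fsupported pi -> (forall z, 0 <= pi z) ->
  supp pi `<=` supp (pushforward fst pi) `*` supp (pushforward snd pi).
Proof.
move=> fpi pi0 z piz; split; rewrite /supp /= gt_eqF //.
- exact: (pushforward_gt0 fst fpi pi0 piz).
- exact: (pushforward_gt0 snd fpi pi0 piz).
Qed.

End Supports.

Lemma face_image (V T : Type) (sK : set (set V)) (g : T -> V) (S S' : set T) :
  is_simplicial_complex sK -> sK (g @` S) -> S' `<=` S -> S' !=set0 -> sK (g @` S').
Proof.
move=> [_ [_ faces]] KS sub [x Sx]; apply: (faces _ _ KS); last by exists (g x), x.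
by move=> _ [y S'y <-]; exists y => //; exact: sub.
Qed.

Lemma prod_complex_box (V W X Y : Type) (sK : set (set V)) (sL : set (set W))
  (phi : X -> V) (psi : Y -> W)
  (S : set (X * Y)) (A : set X) (B : set Y) :
  is_simplicial_complex sK -> is_simplicial_complex sL ->
  finite_set S -> S !=set0 -> S `<=` A `*` B -> sK (phi @` A) -> sL (psi @` B) ->
  prod_complex sK sL (prod_map phi psi @` S).
Proof.
move=> hK hL fS [z Sz] SAB KA LB; split.
- exact: finite_image.
- by exists (prod_map phi psi z), z.
- have -> : fst @` (prod_map phi psi @` S) = phi @` (fst @` S) by rewrite !image_comp.
  apply: (face_image hK KA) => [_ [w Sw <-]|]; last by exists z.1, z.
  by have [] := SAB w Sw.
- have -> : snd @` (prod_map phi psi @` S) = psi @` (snd @` S) by rewrite !image_comp.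
  apply: (face_image hL LB) => [_ [w Sw <-]|]; last by exists z.2, z.
  by have [] := SAB w Sw.
Qed.

Section WassersteinEstimates.
Variable R : realType.
Variable p : R.
Hypothesis p_ge1 : 1 <= p.

Let p_gt0 : 0 < p. Proof. exact: lt_le_trans ltr01 p_ge1. Qed.
Let p_ge0 : 0 <= p. Proof. exact: ltW. Qed.

Lemma wasserstein_pushforward_lt (Z U : choiceType) (dZ : Z -> Z -> R) (dU : U -> U -> R)
  (q : Z -> U) (mu nu : Z -> R) e : 0 < e ->
  (forall u u', 0 <= dU u u') -> (forall z z', dU (q z) (q z') <= dZ z z') ->
  is_fsprob mu -> is_fsprob nu -> wasserstein dZ p mu nu < e ->
  wasserstein dU p (pushforward q mu) (pushforward q nu) < e.
Proof.
move=> e0 dU0 lip pmu pnu /(wasserstein_lt_coupling p_gt0 pmu pnu)[g cpl cost_lt].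
apply: (wasserstein_lt p_gt0 e0 (coupling_pushforward q cpl)).
by apply: le_lt_trans cost_lt; apply: cost_pushforward_le => //; case: cpl.
Qed.

Lemma wasserstein_prod_mass_lt (X Y : choiceType) (dX : X -> X -> R) (dY : Y -> Y -> R)
  (mu mu' : X -> R) (nu nu' : Y -> R) e1 e2 e : 0 < e ->
  (forall x x', 0 <= dX x x') -> (forall y y', 0 <= dY y y') ->
  is_fsprob mu -> is_fsprob mu' -> is_fsprob nu -> is_fsprob nu' ->
  wasserstein dX p mu mu' < e1 -> wasserstein dY p nu nu' < e2 ->
  powR e1 p + powR e2 p <= powR e p ->
  wasserstein (max_metric dX dY) p (prod_mass mu nu) (prod_mass mu' nu') < e.
Proof.
move=> e0 dX0 dY0 pmu pmu' pnu pnu' /(wasserstein_lt_coupling p_gt0 pmu pmu')[g1 cpl1 lt1].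
move=> /(wasserstein_lt_coupling p_gt0 pnu pnu')[g2 cpl2 lt2] budget.
apply: (wasserstein_lt p_gt0 e0 (coupling_tensor cpl1 cpl2)).
have /fsprobP[_ _ mu1] := pmu; have /fsprobP[_ _ nu1] := pnu.
have [g10 fg1 _ _] := cpl1; have [g20 fg2 _ _] := cpl2.
apply: le_lt_trans (cost_tensor_le p dX0 dY0 g10 g20 fg1 fg2
  (coupling_mass1 cpl1 mu1) (coupling_mass1 cpl2 nu1)) _.
by apply: lt_le_trans budget; rewrite ltrD.
Qed.

Lemma powR_half (e : R) : 0 <= e -> powR (e / 2) p + powR (e / 2) p <= powR e p.
Proof.
move=> e0; have half_ge0 : 0 <= 2^-1 :> R by rewrite invr_ge0 ler0n.
have half_p : powR 2^-1 p <= 2^-1 :> R.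
  by apply: ge1r_powR => //; apply/andP; split => //; lra.
have pe0 := powR_ge0 e p.
rewrite powRM //; have := ler_wpM2l pe0 half_p; lra.
Qed.

(* Distance between points of two segments [rho, pi] and [rho', pi'] at times
   t and t': besides the endpoint couplings, only a cross term of weight |t - t'|
   appears, pairing rho with pi' (if t <= t') or pi with rho' (if t' <= t). *)
Lemma wasserstein_segments_lt (T : choiceType) (d : T -> T -> R)
  (rho pi rho' pi' : T -> R) (grho gpi : T * T -> R) t t' B e : 0 < e ->
  0 <= t <= 1 -> 0 <= t' <= 1 ->
  is_fsprob rho -> is_fsprob pi -> is_fsprob rho' -> is_fsprob pi' ->
  is_coupling rho rho' grho -> is_coupling pi pi' gpi ->
  (t <= t' -> cost d p (prod_mass rho pi') <= B) ->
  (t' <= t -> cost d p (prod_mass pi rho') <= B) ->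
  cost d p grho + cost d p gpi + `|t - t'| * B < powR e p ->
  wasserstein d p (mix3 (1 - t) t 0 rho pi pi) (mix3 (1 - t') t' 0 rho' pi' pi') < e.
Proof.
move=> e0 /andP[t0 t1] /andP[t'0 t'1] prho ppi prho' ppi' crho cpi crossl crossr budget.
have [tt'|t't] := leP t t'.
- have -> : mix3 (1 - t) t 0 rho pi pi = mix3 (1 - t') t (t' - t) rho pi rho.
    by apply: funext => z; rewrite /mix3; ring.
  have -> : mix3 (1 - t') t' 0 rho' pi' pi' = mix3 (1 - t') t (t' - t) rho' pi' pi'.
    by apply: funext => z; rewrite /mix3; ring.
  apply: (mix3_wasserstein_lt p_gt0 e0 _ _ _ crho cpi (coupling_prod_mass prho ppi')).
  + by apply/andP; split; lra.
  + exact/andP.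
  + lra.
  have dt_ge0 : 0 <= t' - t by rewrite subr_ge0.
  rewrite distrC ger0_norm // in budget; have := ler_wpM2l dt_ge0 (crossl tt'); lra.
- have -> : mix3 (1 - t) t 0 rho pi pi = mix3 (1 - t) t' (t - t') rho pi pi.
    by apply: funext => z; rewrite /mix3; ring.
  have -> : mix3 (1 - t') t' 0 rho' pi' pi' = mix3 (1 - t) t' (t - t') rho' pi' rho'.
    by apply: funext => z; rewrite /mix3; ring.
  apply: (mix3_wasserstein_lt p_gt0 e0 _ _ _ crho cpi (coupling_prod_mass ppi prho')).
  + by apply/andP; split; lra.
  + exact/andP.
  + lra.
  have dt_ge0 : 0 <= t - t' by rewrite subr_ge0 ltW.
  rewrite ger0_norm // in budget; have := ler_wpM2l dt_ge0 (crossr (ltW t't)); lra.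
Qed.

Lemma coupling_decorrelate (X Y : choiceType) (dX : X -> X -> R) (dY : Y -> Y -> R)
  (pi pi' : X * Y -> R) (g : (X * Y) * (X * Y) -> R) :
  (forall x x', 0 <= dX x x') -> (forall y y', 0 <= dY y y') ->
  is_fsprob pi -> is_coupling pi pi' g ->
  exists2 g', is_coupling (decorrelate pi) (decorrelate pi') g' &
    cost (max_metric dX dY) p g' <= 2 * cost (max_metric dX dY) p g.
Proof.
move=> dX0 dY0 ppi cpl; have [g0 fg _ _] := cpl.
have c1 := coupling_pushforward fst cpl; have c2 := coupling_pushforward snd cpl.
exists (tensor_coupling (pushforward (fun w => (w.1.1, w.2.1)) g)
                        (pushforward (fun w => (w.1.2, w.2.2)) g)).
  exact: coupling_tensor c1 c2.
have /fsprobP[_ _ fst1] := fsprob_pushforward fst ppi.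
have /fsprobP[_ _ snd1] := fsprob_pushforward snd ppi.
apply: le_trans (cost_tensor_le p dX0 dY0 (pushforward_ge0 _ g0) (pushforward_ge0 _ g0)
  (pushforward_fsupported _ fg) (pushforward_fsupported _ fg)
  (coupling_mass1 c1 fst1) (coupling_mass1 c2 snd1)) _.
have := cost_pushforward_le p_ge0 dX0 (@max_metric_ge_l _ _ _ dX dY) g0 fg.
have := cost_pushforward_le p_ge0 dY0 (@max_metric_ge_r _ _ _ dX dY) g0 fg.
lra.
Qed.

End WassersteinEstimates.

Section RealizationMaps.
Variable R : realType.
Variables (X Y : choiceType) (V W : Type) (sK : set (set V)) (sL : set (set W))
  (phi : X -> V) (psi : Y -> W).
Hypotheses (hK : is_simplicial_complex sK) (hL : is_simplicial_complex sL).

Local Notation realK := (@realization R X V sK phi).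
Local Notation realL := (@realization R Y W sL psi).
Local Notation realKL :=
  (@realization R (X * Y)%type (V * W)%type (prod_complex sK sL) (prod_map phi psi)).

Lemma prod_mass_realization (mu : X -> R) (nu : Y -> R) :
  is_fsprob mu /\ sK (phi @` supp mu) -> is_fsprob nu /\ sL (psi @` supp nu) ->
  is_fsprob (prod_mass mu nu) /\
  prod_complex sK sL (prod_map phi psi @` supp (prod_mass mu nu)).
Proof.
move=> [pmu Kmu] [pnu Lnu]; have pprod := fsprob_prod_mass pmu pnu.
split => //; apply: (prod_complex_box hK hL _ _ _ Kmu Lnu).
- by case/fsprobP: pprod.
- exact: supp_fsprob_neq0.
- by move=> z; rewrite /supp /prod_mass /= mulf_eq0 negb_or => /andP[].
Qed.

Lemma marginal_fst_realization (pi : X * Y -> R) :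
  is_fsprob pi /\ prod_complex sK sL (prod_map phi psi @` supp pi) ->
  is_fsprob (pushforward fst pi) /\ sK (phi @` supp (pushforward fst pi)).
Proof.
move=> [ppi [_ _ Kpi _]]; have pfst := fsprob_pushforward fst ppi; split => //.
have {}Kpi : sK (phi @` (fst @` supp pi)) by move: Kpi; rewrite !image_comp.
exact: (face_image hK Kpi (@supp_pushforward R _ _ fst pi) (supp_fsprob_neq0 pfst)).
Qed.

Lemma marginal_snd_realization (pi : X * Y -> R) :
  is_fsprob pi /\ prod_complex sK sL (prod_map phi psi @` supp pi) ->
  is_fsprob (pushforward snd pi) /\ sL (psi @` supp (pushforward snd pi)).
Proof.
move=> [ppi [_ _ _ Lpi]]; have psnd := fsprob_pushforward snd ppi; split => //.
have {}Lpi : sL (psi @` (snd @` supp pi)) by move: Lpi; rewrite !image_comp.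
exact: (face_image hL Lpi (@supp_pushforward R _ _ snd pi) (supp_fsprob_neq0 psnd)).
Qed.

(* Points of the segment from decorrelate pi to pi stay in |K x L|: their
   supports lie in the box of the marginals of pi. *)
Lemma segment_realization (pi : X * Y -> R) s : 0 <= s <= 1 ->
  is_fsprob pi /\ prod_complex sK sL (prod_map phi psi @` supp pi) ->
  is_fsprob (mix3 (1 - s) s 0 (decorrelate pi) pi pi) /\
  prod_complex sK sL (prod_map phi psi @` supp (mix3 (1 - s) s 0 (decorrelate pi) pi pi)).
Proof.
move=> /andP[s0 s1] hpi; have [ppi _] := hpi.
have [pfst Kfst] := marginal_fst_realization hpi.
have [psnd Lsnd] := marginal_snd_realization hpi.
have /fsprobP[rho0 frho rho1] := fsprob_prod_mass pfst psnd.
have /fsprobP[pi0 fpi pi1] := ppi.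
have pmix : is_fsprob (mix3 (1 - s) s 0 (decorrelate pi) pi pi).
  apply/fsprobP; split.
  - by apply: mix3_ge0 => //; lra.
  - exact: mix3_fsupported.
  - by rewrite fsumT_mix3 // rho1 pi1; ring.
split => //; apply: (prod_complex_box hK hL _ _ _ Kfst Lsnd).
- by case/fsprobP: pmix.
- exact: supp_fsprob_neq0.
- move=> z mix_z; have [rho_z|pi_z] : decorrelate pi z != 0 \/ pi z != 0.
    apply: contrapT => /not_orP[/negP/negPn/eqP rho_z /negP/negPn/eqP pi_z].
    by move: mix_z; rewrite /supp /mix3 /= rho_z pi_z !mulr0 !addr0 eqxx.
  + by move: rho_z; rewrite /decorrelate /prod_mass mulf_eq0 negb_or => /andP[].
  + exact: supp_sub_marginals.
Qed.

Definition tensor_point (ab : (realK * realL)%type) : realKL :=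
  exist _ _ (prod_mass_realization (proj2_sig ab.1) (proj2_sig ab.2)).

Definition marginal_points (c : realKL) : (realK * realL)%type :=
  (exist _ _ (marginal_fst_realization (proj2_sig c)),
   exist _ _ (marginal_snd_realization (proj2_sig c))).

Lemma small_step (a b : R) : 0 < a -> 0 < b -> exists2 del, 0 < del <= 1 & del * b <= a.
Proof.
move=> a_gt0 b_gt0; exists (Num.min 1 (a / b)).
  by rewrite lt_min ltr01 divr_gt0 //= ge_min lexx.
by rewrite -ler_pdivlMr // ge_min lexx orbT.
Qed.

(* Times are clamped to [0, 1], so that the homotopy is defined for all t. *)
Definition clamp01 (t : R) : R := if 0 <= t <= 1 then t else 0.

Lemma clamp01_in (t : R) : 0 <= clamp01 t <= 1.
Proof. by rewrite /clamp01; case: ifP => // _; rewrite lexx ler01. Qed.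

Lemma clamp01_id (t : R) : 0 <= t <= 1 -> clamp01 t = t.
Proof. by rewrite /clamp01 => ->. Qed.

Definition segment_point (c : realKL) (t : R) : realKL :=
  exist _ _ (segment_realization (clamp01_in t) (proj2_sig c)).

Lemma marginals_tensor_point (ab : (realK * realL)%type) : marginal_points (tensor_point ab) = ab.
Proof.
case: ab => -[mu [pmu Kmu]] [nu [pnu Lnu]].
have /fsprobP[_ fmu mu1] := pmu; have /fsprobP[_ fnu nu1] := pnu.
by congr pair; apply: eq_exist; apply: funext => z;
  [exact: pushforward_fst_prod_mass | exact: pushforward_snd_prod_mass].
Qed.

Variable p : R.
Hypothesis p_ge1 : 1 <= p.
Variables (dX : X -> X -> R) (dY : Y -> Y -> R).
Hypotheses (hdX : is_metric dX) (hdY : is_metric dY).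

Let p_gt0 : 0 < p. Proof. exact: lt_le_trans ltr01 p_ge1. Qed.
Let dX_ge0 : forall x x', 0 <= dX x x'. Proof. by case: hdX. Qed.
Let dY_ge0 : forall y y', 0 <= dY y y'. Proof. by case: hdY. Qed.
Let dXY_ge0 : forall z z', 0 <= max_metric dX dY z z'.
Proof. exact: max_metric_ge0 dY dX_ge0. Qed.
Let dXY_triangle : forall u v w,
  max_metric dX dY u w <= max_metric dX dY u v + max_metric dX dY v w.
Proof. by case: hdX => _ [_ [_ triX]]; case: hdY => _ [_ [_ triY]]; exact: max_metric_triangle. Qed.

Local Notation distKxL :=
  (max_metric (realization_dist sK phi dX p) (realization_dist sL psi dY p)).
Local Notation distKL :=
  (realization_dist (prod_complex sK sL) (prod_map phi psi) (max_metric dX dY) p).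

Lemma tensor_point_continuous : mcontinuous distKxL distKL tensor_point.
Proof.
move=> [[mu [pmu Kmu]] [nu [pnu Lnu]]] e e0; exists (e / 2); first by rewrite divr_gt0.
move=> [[mu' [pmu' Kmu']] [nu' [pnu' Lnu']]]; rewrite /max_metric gt_max => /andP[Wmu Wnu].
exact: (wasserstein_prod_mass_lt p_ge1 e0 dX_ge0 dY_ge0 pmu pmu' pnu pnu' Wmu Wnu
  (powR_half p_ge1 (ltW e0))).
Qed.

(* marginal_points is 1-Lipschitz: projections are 1-Lipschitz for max_metric. *)
Lemma marginal_points_continuous : mcontinuous distKL distKxL marginal_points.
Proof.
move=> c e e0; exists e => // c' W_lt; rewrite /max_metric gt_max; apply/andP; split.
- exact: (wasserstein_pushforward_lt p_ge1 e0 dX_ge0 (@max_metric_ge_l _ _ _ dX dY)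
    (proj2_sig c).1 (proj2_sig c').1 W_lt).
- exact: (wasserstein_pushforward_lt p_ge1 e0 dY_ge0 (@max_metric_ge_r _ _ _ dX dY)
    (proj2_sig c).1 (proj2_sig c').1 W_lt).
Qed.

(* Joint continuity of the segment homotopy at (c, t): the cross terms of
   wasserstein_segments_lt are bounded near c, and all other costs are small. *)
Lemma segment_point_continuous (c : realKL) t e : 0 <= t <= 1 -> 0 < e ->
  exists2 del : R, 0 < del & forall c' t', 0 <= t' <= 1 ->
    distKL c c' < del -> `|t - t'| < del -> distKL (segment_point c t) (segment_point c' t') < e.
Proof.
move=> t01 e0; have [ppi _] := proj2_sig c; set pi := proj1_sig c in ppi *.
have prho : is_fsprob (decorrelate pi).
  by apply: fsprob_prod_mass; exact: fsprob_pushforward.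
pose dXY := max_metric dX dY.
pose K := cost dXY p (prod_mass (decorrelate pi) pi) + cost dXY p (prod_mass pi (decorrelate pi)).
have K1_ge0 := coupling_cost_ge0 dXY p (coupling_prod_mass prho ppi).
have K2_ge0 := coupling_cost_ge0 dXY p (coupling_prod_mass ppi prho).
pose P := powR 2 p * (K + 2).
have P_ge0 : 0 <= P by rewrite mulr_ge0 ?powR_ge0 //; rewrite /K; lra.
have pe_gt0 : 0 < powR e p by rewrite powR_gt0.
have step_gt0 : 0 < 3 + P by lra.
have [del /andP[del_gt0 del_le1] del_budget] := small_step pe_gt0 step_gt0.
exists del => // c' t' t'01 W_lt dt.
have [ppi' _] := proj2_sig c'; set pi' := proj1_sig c' in ppi' W_lt *.
have prho' : is_fsprob (decorrelate pi').
  by apply: fsprob_prod_mass; exact: fsprob_pushforward.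
have [g cpl_g cost_g] := wasserstein_lt_coupling p_gt0 ppi ppi' W_lt.
have {cost_g} cost_g : cost dXY p g < del.
  by apply: (lt_le_trans cost_g); apply: ge1r_powR => //; apply/andP.
have cost_g_ge0 := coupling_cost_ge0 dXY p cpl_g.
have [gr cpl_gr cost_gr] := coupling_decorrelate p_ge1 dX_ge0 dY_ge0 ppi cpl_g.
rewrite /realization_dist /segment_point /= !clamp01_id //.
apply: (wasserstein_segments_lt p_ge1 (B := P) e0 t01 t'01 prho ppi prho' ppi' cpl_gr cpl_g).
- move=> _; apply: le_trans (cost_prod_mass_le (ltW p_gt0) dXY_ge0 dXY_triangle prho ppi cpl_g) _.
  by rewrite ler_wpM2l ?powR_ge0 //; rewrite /K; lra.
- move=> _; apply: le_trans (cost_prod_mass_le (ltW p_gt0) dXY_ge0 dXY_triangle ppi prho cpl_gr) _.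
  by rewrite ler_wpM2l ?powR_ge0 //; rewrite /K; lra.
- have : `|t - t'| * P <= del * P by rewrite ler_wpM2r // ltW.
  lra.
Qed.

Lemma tensor_marginals_homotopic :
  mhomotopic distKxL distKxL (marginal_points \o tensor_point) id.
Proof.
exists (fun ab _ => ab); split => [ab t e _ e0|ab|//].
- by exists e => // ab' t' _ ab_close _.
- by rewrite /= marginals_tensor_point.
Qed.

Lemma marginals_tensor_homotopic :
  mhomotopic distKL distKL (tensor_point \o marginal_points) id.
Proof.
exists segment_point; split => [c t e|c|[pi hpi]]; first exact: segment_point_continuous.
all: apply: eq_exist; rewrite clamp01_id ?lexx ?ler01 //; apply: funext => z.
all: by rewrite /mix3 /decorrelate /=; ring.
Qed.

Theorem realizations_homotopy_equivalent : mhomotopy_equivalent distKxL distKL.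
Proof.
exists tensor_point, marginal_points; split.
- exact: tensor_point_continuous.
- exact: marginal_points_continuous.
- exact: tensor_marginals_homotopic.
- exact: marginals_tensor_homotopic.
Qed.

End RealizationMaps.

Theorem proposition5p1 (R : realType) (p : R) (hp : 1 <= p)
  (X Y : choiceType) (V W : Type)
  (dX : X -> X -> R) (dY : Y -> Y -> R)
  (sK : set (set V)) (sL : set (set W))
  (phi : X -> V) (psi : Y -> W)
  (hdX : is_metric dX) (hdY : is_metric dY)
  (hK : is_simplicial_complex sK) (hL : is_simplicial_complex sL)
  (hphi : bijective phi) (hpsi : bijective psi) :
  mhomotopy_equivalent
    (max_metric (realization_dist sK phi dX p) (realization_dist sL psi dY p))
    (realization_dist (prod_complex sK sL) (prod_map phi psi) (max_metric dX dY) p).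
Proof. exact: (realizations_homotopy_equivalent phi psi hK hL hp hdX hdY). Qed.
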